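(* Let $A$ be an MV-algebra, $d$ a $(\odot,\vee)$-derivation on $A$, and $u\in A$ with $u\le d(1)$. Define $d^u:A\to A$ by $d^u(1)=u$ and $d^u(x)=d(x)$ for $x\ne 1$. Then $d^u$ is a $(\odot,\vee)$-derivation on $A$. In particular, for every $u\in A$ the map $\chi^{(u)}$ defined by $\chi^{(u)}(1)=u$ and $\chi^{(u)}(x)=x$ for $x\neq 1$ is a $(\odot,\vee)$-derivation on $A$.
   Context: An MV-algebra is an algebra $(A,\oplus,{}^*,0)$ of type $(2,1,0)$ satisfying: $x\oplus(y\oplus z)=(x\oplus y)\oplus z$, $x\oplus y=y\oplus x$, $x\oplus 0=x$, $x^{**}=x$, $x\oplus 0^*=0^*$, $(x^*\oplus y)^*\oplus y=(y^*\oplus x)^*\oplus x$. Put $1=0^*$ and $x\odot y=(x^*\oplus y^* )^*$. The natural order is $x\le y$ iff $x^*\oplus y=1$, with lattice operations $x\vee y=(x\odot y^* )\oplus y$, $x\wedge y=x\odot(x^*\oplus y)$. A $(\odot,\vee)$-derivation on $A$ is a map $d:A\to A$ with $d(x\odot y)=(d(x)\odot y)\vee(x\odot d(y))$ for all $x,y\in A$. *)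

Set Implicit Arguments.

Record MVAlgebra : Type := {
  mv_car :> Type;
  mv_oplus : mv_car -> mv_car -> mv_car;
  mv_neg : mv_car -> mv_car;
  mv_zero : mv_car;
  mv_assoc : forall x y z, mv_oplus x (mv_oplus y z) = mv_oplus (mv_oplus x y) z;
  mv_comm : forall x y, mv_oplus x y = mv_oplus y x;
  mv_zero_r : forall x, mv_oplus x mv_zero = x;
  mv_negK : forall x, mv_neg (mv_neg x) = x;
  mv_one_abs : forall x, mv_oplus x (mv_neg mv_zero) = mv_neg mv_zero;
  mv_luk : forall x y,
    mv_oplus (mv_neg (mv_oplus (mv_neg x) y)) y =
    mv_oplus (mv_neg (mv_oplus (mv_neg y) x)) x
}.

Section Ops.
Variable A : MVAlgebra.
Definition mv_one : A := mv_neg A (mv_zero A).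
Definition mv_odot (x y : A) : A :=
  mv_neg A (mv_oplus A (mv_neg A x) (mv_neg A y)).
Definition mv_le (x y : A) : Prop := mv_oplus A (mv_neg A x) y = mv_one.
Definition mv_join (x y : A) : A := mv_oplus A (mv_odot x (mv_neg A y)) y.
Definition mv_meet (x y : A) : A := mv_odot x (mv_oplus A (mv_neg A x) y).

Definition is_odot_join_derivation (d : A -> A) : Prop :=
  forall x y, d (mv_odot x y) = mv_join (mv_odot (d x) y) (mv_odot x (d y)).
End Ops.
Arguments mv_one : clear implicits.
Arguments mv_odot {A}. Arguments mv_le {A}. Arguments mv_join {A}.
Arguments mv_meet {A}. Arguments is_odot_join_derivation {A}.

From Stdlib Require Import Classical.

(* The derivation identity at (1, y) reads d(y) = (d(1) . y) v d(y),
   so d(1) . y <= d(y), hence u . y <= d(y) for every y.  Checking the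
   identity for d^u at a pair (x, y):
   - x = y = 1: both sides equal u, since u v u = u;
   - exactly one of x, y equals 1, say x: the right side is (u . y) v d(y),
     which is d(y) = d^u(y) because u . y <= d(y);
   - x, y <> 1: then x . y <> 1 (as x . y <= x), and d^u agrees with d there.
   The identity map is a derivation (idempotence of join), and chi^(v) is its
   modification at 1 by v <= 1, which gives the second claim. *)

Section MVFacts.
Variable A : MVAlgebra.
Local Notation "x (+) y" := (mv_oplus A x y) (at level 50, left associativity).
Local Notation "x ^*" := (mv_neg A x) (at level 2).
Local Notation "0" := (mv_zero A).
Local Notation "1" := (mv_one A).
Implicit Types x y w : A.

Lemma oplus_zero_l x : 0 (+) x = x.
Proof. rewrite mv_comm; apply mv_zero_r. Qed.

Lemma neg_one : 1^* = 0.
Proof. apply mv_negK. Qed.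

Lemma oplus_one_l x : 1 (+) x = 1.
Proof. rewrite mv_comm; apply mv_one_abs. Qed.

Lemma oplus_negx_x x : x^* (+) x = 1.
Proof.
  pose proof (mv_luk A x 1) as H.
  rewrite mv_one_abs, neg_one, oplus_zero_l in H.
  symmetry; exact H.
Qed.

Lemma odotC x y : mv_odot x y = mv_odot y x.
Proof. unfold mv_odot; rewrite mv_comm; reflexivity. Qed.

Lemma odot_one_l x : mv_odot 1 x = x.
Proof. unfold mv_odot; rewrite neg_one, oplus_zero_l, mv_negK; reflexivity. Qed.

Lemma odot_one_r x : mv_odot x 1 = x.
Proof. rewrite odotC; apply odot_one_l. Qed.

Lemma joinC x y : mv_join x y = mv_join y x.
Proof. unfold mv_join, mv_odot. rewrite !mv_negK. apply mv_luk. Qed.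

Lemma join_of_le x y : mv_le x y -> mv_join x y = y.
Proof.
  unfold mv_le, mv_join, mv_odot; intro H.
  rewrite mv_negK, H, neg_one. apply oplus_zero_l.
Qed.

Lemma le_witness x y : mv_le x y <-> exists w, y = x (+) w.
Proof.
  split.
  - intro H. exists (mv_odot y x^*).
    rewrite mv_comm. rewrite <- (join_of_le _ _ H) at 1. apply joinC.
  - intros [w ->]. unfold mv_le. rewrite mv_assoc, oplus_negx_x. apply oplus_one_l.
Qed.

Lemma le_trans x y w : mv_le x y -> mv_le y w -> mv_le x w.
Proof.
  rewrite !le_witness. intros [a ->] [b ->]. exists (a (+) b). apply eq_sym, mv_assoc.
Qed.

Lemma le_top x : mv_le x 1.
Proof. apply mv_one_abs. Qed.

Lemma top_le x : mv_le 1 x -> x = 1.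
Proof. unfold mv_le. rewrite neg_one, oplus_zero_l. auto. Qed.

Lemma le_neg x y : mv_le x y -> mv_le y^* x^*.
Proof. unfold mv_le; intro H. rewrite mv_negK, mv_comm; exact H. Qed.

Lemma le_oplus_l x y w : mv_le x y -> mv_le (x (+) w) (y (+) w).
Proof.
  rewrite !le_witness. intros [a ->]. exists a.
  rewrite <- !mv_assoc, (mv_comm _ a w). reflexivity.
Qed.

Lemma le_odot_l x y w : mv_le x y -> mv_le (mv_odot x w) (mv_odot y w).
Proof. intro H. apply le_neg, le_oplus_l, le_neg, H. Qed.

Lemma odot_le_l x y : mv_le (mv_odot x y) x.
Proof.
  rewrite <- (odot_one_r x) at 2. rewrite (odotC x y), (odotC x 1).
  apply le_odot_l, le_top.
Qed.

Lemma odot_eq_one_l x y : mv_odot x y = 1 -> x = 1.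
Proof. intro E. apply top_le. rewrite <- E. apply odot_le_l. Qed.

Lemma join_idem x : mv_join x x = x.
Proof. apply join_of_le, oplus_negx_x. Qed.

Lemma le_join_r x y : mv_le y (mv_join x y).
Proof. apply le_witness. exists (mv_odot x y^*). apply mv_comm. Qed.

End MVFacts.

Arguments join_of_le {A x y}.
Arguments odot_eq_one_l {A x y}.

Section Derivations.
Variable A : MVAlgebra.
Local Notation "1" := (mv_one A).

Lemma id_is_derivation : is_odot_join_derivation (fun x : A => x).
Proof. intros x y. symmetry; apply join_idem. Qed.

Lemma derivation_top_odot_le (d : A -> A) :
  is_odot_join_derivation d -> forall y, mv_le (mv_odot (d 1) y) (d y).
Proof.
  intros Hd y. pose proof (Hd 1 y) as E. rewrite odot_one_l in E.
  rewrite E, joinC. apply le_join_r.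
Qed.

Lemma derivation_modified_at_top (d du : A -> A) (u : A) :
  is_odot_join_derivation d -> mv_le u (d 1) ->
  du 1 = u -> (forall x, x <> 1 -> du x = d x) ->
  is_odot_join_derivation du.
Proof.
  intros Hd Hu Hdu1 Hdu x y.
  assert (Hdom : forall w, mv_le (mv_odot u w) (d w)).
  { intro w. apply le_trans with (mv_odot (d 1) w).
    - apply le_odot_l, Hu.
    - apply derivation_top_odot_le, Hd. }
  destruct (classic (x = 1)) as [->|Nx]; destruct (classic (y = 1)) as [->|Ny].
  - rewrite !odot_one_l, Hdu1, odot_one_r. symmetry; apply join_idem.
  - rewrite !odot_one_l, Hdu1, (Hdu y Ny). symmetry; apply join_of_le, Hdom.
  - rewrite !odot_one_r, Hdu1, (Hdu x Nx), joinC, odotC.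
    symmetry; apply join_of_le, Hdom.
  - assert (Nxy : mv_odot x y <> 1) by (intro E; apply Nx, (odot_eq_one_l E)).
    rewrite (Hdu _ Nxy), (Hdu x Nx), (Hdu y Ny). apply Hd.
Qed.

End Derivations.

Arguments derivation_modified_at_top {A d du u}.

Theorem proposition3p12 (A : MVAlgebra) (d : A -> A) (u : A) :
  is_odot_join_derivation d ->
  mv_le u (d (mv_one A)) ->
  (forall du : A -> A,
     du (mv_one A) = u ->
     (forall x : A, x <> mv_one A -> du x = d x) ->
     is_odot_join_derivation du)
  /\
  (forall (v : A) (chi : A -> A),
     chi (mv_one A) = v ->
     (forall x : A, x <> mv_one A -> chi x = x) ->
     is_odot_join_derivation chi).
Proof.
  intros Hd Hu. split.
  - intros du. apply (derivation_modified_at_top Hd Hu).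
  - intros v chi. apply (derivation_modified_at_top (id_is_derivation A)), le_top.
Qed.
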